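(* Let $r\ge2$, $N\ge r-1$, $d\ge1$ be integers. For any function $f\colon\Delta_N\to\mathbb{R}^d$, we have $\delta(\mathrm{Conf}_r^{\Delta}(f))\le\sqrt{r}\cdot\delta(f)$.
   Context: $\Delta_N$ is the geometric $N$-simplex. $\mathrm{Conf}_r^{\Delta}(\Delta_N)=\{(x_1,\dots,x_r)\in(\Delta_N)^{\times r}: \text{the } x_i \text{ lie in pairwise disjoint faces}\}$ with the subspace topology. $W_r^{\oplus d}=\{(z_1,\dots,z_r)\in(\mathbb{R}^d)^{\oplus r}: z_1+\dots+z_r=0\}$ with the Euclidean norm. $\mathrm{Conf}_r^{\Delta}(f)\colon\mathrm{Conf}_r^{\Delta}(\Delta_N)\to W_r^{\oplus d}$ is $(x_1,\dots,x_r)\mapsto\big(f(x_i)-\tfrac1r\sum_{j=1}^rf(x_j)\big)_{i=1}^r$. For a topological space $X$ and a metric space $Y$, $\delta(h)=\inf\{\delta\ge 0 : \text{for every } x\in X \text{ there is an open neighborhood } U_x \text{ of } x \text{ with } \operatorname{diam}(h(U_x))\le\delta\}$. *)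

From HB Require Import structures.
From mathcomp Require Import all_boot all_order all_algebra.
From mathcomp Require Import all_classical all_reals all_analysis.
Set Implicit Arguments. Unset Strict Implicit. Unset Printing Implicit Defensive.
Import Order.TTheory GRing.Theory Num.Theory.
Import numFieldNormedType.Exports.
Local Open Scope classical_set_scope.
Local Open Scope ring_scope.

Section Defs.
Variable R : realType.

(* Euclidean distance on m x n real matrices (all entries squared). For row
   vectors 'rV_d this is the Euclidean distance on R^d; for 'M_(r,d) it is
   the Euclidean norm on (R^d)^{oplus r}. *)
Definition edist (m n : nat) (a b : 'M[R]_(m, n)) : R :=
  Num.sqrt (\sum_(i < m) \sum_(j < n) (a i j - b i j) ^+ 2).

Definition ediam (m n : nat) (B : set 'M[R]_(m, n)) : \bar R :=
  ereal_sup [set (edist a b)%:E | a in B & b in B].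

(* delta(h) for h restricted to a subspace A of a topological space T:
   open neighbourhoods of x in the subspace topology are the U `&` A with U
   open in T and x in U. *)
Definition delta (T : topologicalType) (A : set T) (m n : nat)
    (h : T -> 'M[R]_(m, n)) : \bar R :=
  ereal_inf [set e%:E | e in [set e : R | 0 <= e /\
    (forall x, A x -> exists U : set T, [/\ open U, U x &
        (ediam (h @` (U `&` A)) <= e%:E)%E])]].

(* geometric N-simplex, as the standard simplex in R^{N+1} *)
Definition simplex (N : nat) : set 'rV[R]_N.+1 :=
  [set x | (forall i, 0 <= x 0 i) /\ \sum_i x 0 i = 1].

Definition face (N : nat) (S : {set 'I_N.+1}) : set 'rV[R]_N.+1 :=
  [set x | simplex x /\ forall i, x 0 i != 0 -> i \in S].

(* Conf_r^Delta(Delta_N); row i of X is the point x_i *)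
Definition confD (r N : nat) : set 'M[R]_(r, N.+1) :=
  [set X | exists F : 'I_r -> {set 'I_N.+1},
     [/\ forall i, F i != finset.set0,
         forall i j, i != j -> (F i :&: F j)%SET = finset.set0 &
         forall i, face (F i) (row i X)]].

(* Conf_r^Delta(f); row i of the result is f(x_i) - (1/r) sum_j f(x_j) *)
Definition confF (r N d : nat) (f : 'rV[R]_N.+1 -> 'rV[R]_d)
    (X : 'M[R]_(r, N.+1)) : 'M[R]_(r, d) :=
  \matrix_(i < r, k < d)
     (f (row i X) 0 k - r%:R^-1 * \sum_(j < r) f (row j X) 0 k).

End Defs.

From Pilot Require Import Defs.
From HB Require Import structures.
From mathcomp Require Import all_boot all_order all_algebra.
From mathcomp Require Import all_classical all_reals all_analysis.
From mathcomp Require Import ring.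
Set Implicit Arguments.
Unset Strict Implicit.
Unset Printing Implicit Defensive.
Import Order.TTheory GRing.Theory Num.Theory.
Import numFieldNormedType.Exports.
Local Open Scope classical_set_scope.
Local Open Scope ring_scope.

(* Conf_r(f) is the composite of f applied row by row with the projection
   onto W_r, which subtracts the mean row.  The projection is 1-Lipschitz
   (a column's squared deviation from its mean is at most its sum of
   squares), and a matrix whose r rows are each within e of those of another
   is within sqrt r * e of it.  Given the neighbourhoods U_i witnessing
   delta(f) <= e at the points x_i, the set of configurations whose i-th point
   lies in U_i for every i is a neighbourhood witnessing
   delta(Conf_r(f)) <= sqrt r * e. *)

Lemma sum_sqr_sub_mean_le (R : realFieldType) r (a : 'I_r -> R) :
  \sum_i (a i - r%:R^-1 * \sum_j a j) ^+ 2 <= \sum_i a i ^+ 2.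
Proof.
case: r a => [|r] a; first by rewrite !big_ord0.
set m := _ * _.
have sum_a : \sum_i a i = r.+1%:R * m by rewrite /m mulrA mulfV ?mul1r.
have -> : \sum_i (a i - m) ^+ 2 = \sum_i a i ^+ 2 - r.+1%:R * m ^+ 2.
  under eq_bigr do rewrite sqrrB.
  rewrite big_split /= sumrB sumr_const card_ord sumrMnl -mulr_suml sum_a.
  rewrite -(mulr_natl (m ^+ 2)) -(mulr_natl (r.+1%:R * m * m) 2); ring.
by rewrite lerBlDr lerDl mulr_ge0 // sqr_ge0.
Qed.

Section Distances.
Variable R : realType.

Definition center_rows r d (A : 'M[R]_(r, d)) : 'M[R]_(r, d) :=
  \matrix_(i, k) (A i k - r%:R^-1 * \sum_j A j k).

Lemma edist_center_rows r d (A B : 'M[R]_(r, d)) :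
  Defs.edist (center_rows A) (center_rows B) <= Defs.edist A B.
Proof.
rewrite /Defs.edist ler_wsqrtr // exchange_big [leRHS]exchange_big /=.
apply: ler_sum => k _.
have centerB i : center_rows A i k - center_rows B i k =
    (A i k - B i k) - r%:R^-1 * \sum_j (A j k - B j k).
  by rewrite !mxE sumrB; ring.
under eq_bigr do rewrite centerB.
exact: sum_sqr_sub_mean_le.
Qed.

Lemma edist_le_rows r n (A B : 'M[R]_(r, n)) e : 0 <= e ->
  (forall i, Defs.edist (row i A) (row i B) <= e) ->
  Defs.edist A B <= Num.sqrt r%:R * e.
Proof.
move=> e0 rowAB.
have row_sum i : \sum_k (A i k - B i k) ^+ 2 <= e ^+ 2.
  move: (rowAB i); rewrite /Defs.edist big_ord1 -[e in _ <= e]ger0_norm //.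
  rewrite -sqrtr_sqr ler_sqrt ?sqr_ge0 //.
  by under eq_bigr do rewrite !mxE.
rewrite -[e in _ * e]ger0_norm // -sqrtr_sqr -sqrtrM // ler_wsqrtr //.
apply: le_trans (ler_sum _ (fun i _ => row_sum i)) _.
by rewrite sumr_const card_ord mulr_natl.
Qed.

Lemma edist_le_ediam m n (B : set 'M[R]_(m, n)) a b :
  B a -> B b -> ((Defs.edist a b)%:E <= ediam B)%E.
Proof. by move=> Ba Bb; apply: ereal_sup_ubound; exists a => //; exists b. Qed.

Lemma ediam_le m n (B : set 'M[R]_(m, n)) e :
  (forall a b, B a -> B b -> Defs.edist a b <= e) -> (ediam B <= e%:E)%E.
Proof.
move=> Bdist; apply: ge_ereal_sup => _ [a Ba [b Bb <-]].
by rewrite lee_fin; apply: Bdist.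
Qed.

End Distances.

Section Oscillation.
Variable R : realType.

Definition local_diam_le (T : topologicalType) (A : set T) m n
    (h : T -> 'M[R]_(m, n)) (e : R) : Prop :=
  forall x, A x -> exists U : set T,
    [/\ open U, U x & (ediam (h @` (U `&` A)) <= e%:E)%E].

Lemma delta_le_scale (T T' : topologicalType) (A : set T) (B : set T')
    m n p q (h : T -> 'M[R]_(m, n)) (g : T' -> 'M[R]_(p, q)) (c : R) :
  0 < c ->
  (forall e, 0 <= e -> local_diam_le A h e -> local_diam_le B g (c * e)) ->
  (delta B g <= c%:E * delta A h)%E.
Proof.
move=> c_gt0 scale; rewrite /delta -ereal_inf_pZl //.
apply: le_ereal_inf_tmp => _ [_ [e [e0 he] <-] <-].
rewrite -EFinM; apply: ereal_inf_lbound.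
by exists (c * e) => //; split; [rewrite mulr_ge0 // ltW | exact: scale].
Qed.

Lemma row_ball r n (X Y : 'M[R]_(r, n)) eps i :
  ball X eps Y -> ball (row i X) eps (row i Y).
Proof. by move=> [eps_gt0 XY]; split => // i' j; rewrite !mxE; exact: XY. Qed.

Lemma nbhs_row r n (X : 'M[R]_(r, n)) i (U : set 'rV[R]_n) :
  nbhs (row i X) U -> nbhs X [set Y | U (row i Y)].
Proof.
move=> /nbhs_ballP[eps eps_gt0 ballU]; apply/nbhs_ballP.
by exists eps => // Y /(row_ball i); exact: ballU.
Qed.

End Oscillation.

Section Configurations.
Variables (R : realType) (r N d : nat) (f : 'rV[R]_N.+1 -> 'rV[R]_d).

Lemma confD_row_simplex (X : 'M[R]_(r, N.+1)) i :
  confD X -> simplex (row i X).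
Proof. by case=> F [_ _ /(_ i) []]. Qed.

Definition map_rows (X : 'M[R]_(r, N.+1)) : 'M[R]_(r, d) :=
  \matrix_(i, k) f (row i X) 0 k.

Lemma row_map_rows X i : row i (map_rows X) = f (row i X).
Proof. by apply/rowP => k; rewrite !mxE. Qed.

Lemma confFE X : confF f X = center_rows (map_rows X).
Proof.
by apply/matrixP => i k; rewrite !mxE; under [in RHS]eq_bigr do rewrite mxE.
Qed.

Lemma edist_confF (X Y : 'M[R]_(r, N.+1)) e : 0 <= e ->
  (forall i, Defs.edist (f (row i X)) (f (row i Y)) <= e) ->
  Defs.edist (confF f X) (confF f Y) <= Num.sqrt r%:R * e.
Proof.
move=> e0 rowXY; rewrite !confFE.
apply: le_trans (edist_center_rows _ _) _.
by apply: edist_le_rows => // i; rewrite !row_map_rows.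
Qed.

End Configurations.

Theorem lemma4p11 (R : realType) (r N d : nat) (f : 'rV[R]_N.+1 -> 'rV[R]_d) :
  (2 <= r)%N -> (r.-1 <= N)%N -> (1 <= d)%N ->
  (delta (@confD R r N) (confF f) <= (Num.sqrt r%:R)%:E * delta (@simplex R N) f)%E.
Proof.
move=> r_ge2 _ _.
apply: delta_le_scale; first by rewrite sqrtr_gt0 ltr0n (leq_trans _ r_ge2).
move=> e e0 f_diam X confX.
have [U UP] := choice (fun i => f_diam _ (confD_row_simplex i confX)).
pose V := [set Y : 'M[R]_(r, N.+1) | forall i, U i (row i Y)].
have nbhsV : nbhs X V.
  apply: (@filter_forall _ _ (fun i Y => U i (row i Y)) (nbhs X) _) => i.
  by apply: nbhs_row; have [openU Ux _] := UP i; exact: open_nbhs_nbhs.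
exists V°; split; [exact: open_interior | exact: nbhsV |].
have rowU Y i : (V° `&` @confD R r N) Y -> (U i `&` @simplex R N) (row i Y).
  by move=> [/interior_subset VY confY];
    split; [exact: VY | exact: confD_row_simplex].
apply: ediam_le => _ _ [Y VY <-] [Y' VY' <-].
apply: edist_confF => // i; have [_ _ diamU] := UP i.
rewrite -lee_fin; apply: le_trans diamU.
by apply: edist_le_ediam; apply: imageP; exact: rowU.
Qed.
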